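(* Let $n>k\geq 1$ be integers, $r=n-k$, and let $k<d_1<d_2<\cdots<d_m\leq n-1$ be integers. Put $s_i=d_i-k+1$ for $i\in[m]$, $s=\mathrm{lcm}(s_1,\ldots,s_{m-1})$ (with $s=1$ if $m=1$), and $\ell=s\cdot s_m^n$. Let $F$ be a finite field with $|F|\geq s_m n$ and let $\lambda_{i,j}$, $i\in[n]$, $j\in[0,s_m-1]$, be $s_m n$ distinct elements of $F$. Let $\mathcal{C}_1$ be the set of all $(\bm c_1,\ldots,\bm c_n)$ with $\bm c_i=(c_{i,0},\ldots,c_{i,\ell-1})\in F^\ell$ satisfying $$\sum_{i=1}^n \lambda_{i,a_i}^{t-1} c_{i,(a,b)}=0\quad\text{for all } a\in[0,s_m^n-1],\ b\in[0,s-1],\ t\in[r].$$ Then $\mathcal{C}_1$ is an $(n,k,\ell)$ MDS array code satisfying the $(1,d_i)$-optimal repair property for every $i\in[m]$ simultaneously.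
   Context: Notation: $[n]=\{1,\ldots,n\}$ and $[i,j]=\{i,i+1,\ldots,j\}$. Each $\tau\in[0,\ell-1]$ is written uniquely as $\tau=b\cdot s_m^n+\sum_{i=1}^n a_i s_m^{i-1}$ with $b\in[0,s-1]$, $a_i\in[0,s_m-1]$; we write $a=(a_1,\ldots,a_n)=\sum_i a_i s_m^{i-1}\in[0,s_m^n-1]$ and $\tau=(a,b)$, so $c_{i,(a,b)}=c_{i,\tau}$. An $(n,k,\ell)$ MDS array code over $F$ is an $F$-linear set of vectors $(\bm c_1,\ldots,\bm c_n)$, $\bm c_i\in F^\ell$ (node $i$ stores $\bm c_i$), of dimension $k\ell$, such that any $k$ of the coordinates $\bm c_i$ determine the whole codeword. For $1\leq h\leq n-k$ and $k\leq d\leq n-h$, the code has the $(h,d)$-optimal repair property if for every $h$-subset $\mathcal{H}\subseteq[n]$ of failed nodes and every $d$-subset $\mathcal{R}\subseteq[n]\setminus\mathcal{H}$ of helper nodes, there is a scheme in which each helper $j\in\mathcal{R}$ sends $\beta=\frac{h\ell}{d-k+h}$ symbols of $F$ computed from $\bm c_j$ and from these $d\beta=\frac{dh\ell}{d-k+h}$ symbols in total all $\bm c_i$, $i\in\mathcal{H}$, can be determined, for every codeword (this meets the cut-set bound $\beta\geq \frac{h\ell}{d-k+h}$ with equality). For $h=1$ this is the MSR (optimal single-node repair) property with repair degree $d$. *)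

From HB Require Import structures.
From mathcomp Require Import all_boot all_order all_algebra.
Set Implicit Arguments. Unset Strict Implicit. Unset Printing Implicit Defensive.
Import GRing.Theory.
Local Open Scope ring_scope.

(* A codeword of an (n,k,ell) array code over F is a matrix c : 'M[F]_(n,ell);
   row i (0-indexed) is the content c_{i+1} stored by node i+1. *)

(* (n,k,ell) MDS array code: an F-linear set of codewords of dimension k*ell
   (for a finite field: |C| = |F|^(k ell)) such that any k nodes determine
   the whole codeword. *)
Definition is_MDS_array_code (F : finFieldType) (n k ell : nat)
  (C : pred 'M[F]_(n, ell)) : Prop :=
  [/\ C 0,
      (forall (a : F) (x y : 'M[F]_(n, ell)), C x -> C y -> C (a *: x + y)),
      #|[set c | C c]| = (#|F| ^ (k * ell))%N &
      (forall K : {set 'I_n}, #|K| = k ->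
         forall c c', C c -> C c' ->
           (forall i, i \in K -> row i c = row i c') -> c = c')].

Definition repair_beta (k ell h d : nat) : nat := (h * ell %/ (d - k + h))%N.

(* (h,d)-optimal repair property: beta is an integer and for every h-set H of
   failed nodes and every d-set R of helpers disjoint from H, each helper j
   sends beta symbols f j (c_j) computed from its own content only, and from
   these symbols (and nothing else) all c_i, i in H, are recovered. *)
Definition optimal_repair (F : finFieldType) (n k ell : nat)
  (C : pred 'M[F]_(n, ell)) (h d : nat) : Prop :=
  (d - k + h %| h * ell)%N /\
  forall H R : {set 'I_n}, #|H| = h -> #|R| = d -> [disjoint H & R] ->
    exists f : 'I_n -> 'rV[F]_ell -> 'rV[F]_(repair_beta k ell h d),
    exists g : ('I_n -> 'rV[F]_(repair_beta k ell h d)) -> 'M[F]_(n, ell),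
      forall c, C c -> forall i, i \in H ->
        row i (g (fun j => if j \in R then f j (row j c) else 0)) = row i c.

(* Parameters: d : nat -> nat, with d_1,...,d_m meaningful (1-indexed). *)
Definition s_of (k : nat) (d : nat -> nat) (i : nat) : nat := (d i - k + 1)%N.
Definition s_lcm (k m : nat) (d : nat -> nat) : nat :=
  \big[lcmn/1%N]_(1 <= i < m) s_of k d i.
Definition ell_of (n k m : nat) (d : nat -> nat) : nat :=
  (s_lcm k m d * s_of k d m ^ n)%N.

(* digit a_{i+1} of tau = (a,b): a = tau mod s_m^n, b = tau div s_m^n,
   a = sum_i a_i s_m^(i-1); node index i : 'I_n is 0-indexed. *)
Definition digit (sm n i tau : nat) : nat := ((tau %% sm ^ n) %/ sm ^ i %% sm)%N.

(* The code C_1: sum_i lambda_{i,a_i}^(t-1) c_{i,(a,b)} = 0 for all tau=(a,b)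
   and t in [r], r = n - k (t-1 ranges over 'I_r). *)
Definition C1 (F : finFieldType) (n k m : nat) (d : nat -> nat)
  (lambda : 'I_n -> nat -> F) : pred 'M[F]_(n, ell_of n k m d) :=
  fun c => [forall tau : 'I_(ell_of n k m d), forall t : 'I_(n - k),
    \sum_(i < n) lambda i (digit (s_of k d m) n i tau) ^+ t * c i tau == 0].

(* C1 is a parity-check code: at coordinate tau node i carries the point
   lambda_{i,a_i}, and the checks of tau say that the first r = n - k power sums of
   these points, weighted by the entries c_{i,tau}, vanish.  If a weighted family
   takes at most r distinct points and its first r weighted power sums vanish, then
   the total weight at each point vanishes: apply the polynomial that vanishes at
   all the other points.  The n points of one coordinate are distinct, so any k
   nodes determine a codeword, and c |-> (first k rows, syndrome) is a bijection
   onto 'M_(k, ell) * 'M_(r, ell), whence |C1| = |F|^(k ell).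

   To repair node h from a set R of d helpers, let s_i = d - k + 1, which divides
   s * s_m.  Cut the coordinates into ell / s_i blocks of s_i coordinates that agree
   in every digit except a_h, on which a_h is injective: write b * s_m + a_h and
   split its range into intervals of length s_i.  Every helper sends its sum over
   each block.  Summing the checks of a block, a helper's point is constant on the
   block, so its contribution is known; what remains involves the s_i points of
   node h and one point for each of the n - d - 1 other nodes outside R, r points
   in all, and the power-sum argument isolates every entry of node h. *)

From HB Require Import structures.
From mathcomp Require Import all_boot all_order all_algebra.
From mathcomp Require Import zify.
Set Implicit Arguments. Unset Strict Implicit. Unset Printing Implicit Defensive.
Import GRing.Theory.

Lemma digitE sm n j t : j < n -> digit sm n j t = t %/ sm ^ j %% sm.
Proof.
move=> lt_jn; rewrite /digit !modn_divl; congr (_ %/ _).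
by rewrite -expnS; apply: modn_dvdm; apply: dvdn_exp2l.
Qed.

Lemma edivn_uniq D x y x' y' : y < D -> y' < D ->
  x * D + y = x' * D + y' -> x = x' /\ y = y'.
Proof.
by move=> lt_yD lt_y'D eq_xy; have := edivn_eq x lt_yD; rewrite eq_xy edivn_eq // => -[-> ->].
Qed.

Lemma eq_of_divn_modn si sm p p' : 0 < si <= sm ->
  p %/ si = p' %/ si -> p = p' %[mod sm] -> p = p'.
Proof.
move=> /andP[si_gt0 si_le_sm] eq_div.
wlog le_pp' : p p' eq_div / p <= p'.
  move=> wlog_le eq_mod; have [le_pp' | /ltnW le_p'p] := leqP p p'; first exact: wlog_le.
  exact/esym/wlog_le.
move/eqP; rewrite eq_sym eqn_mod_dvd // => dvd_diff.
have lt_diff : p' - p < sm.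
  apply: leq_trans si_le_sm; rewrite (divn_eq p si) (divn_eq p' si) eq_div.
  by have := ltn_pmod p si_gt0; lia.
have [diff0 | diff_gt0] := posnP (p' - p).
  by apply/eqP; rewrite eqn_leq le_pp' -subn_eq0 diff0.
by move: lt_diff; rewrite ltnNge dvdn_leq.
Qed.

Lemma homo_leq_interval (f : nat -> nat) a b :
  (forall i, a <= i -> i < b -> f i <= f i.+1) ->
  {in [pred i | a <= i <= b] &, {homo f : i j / i <= j}}.
Proof.
move=> f_step; apply: homo_leq_in => [x | y x z | i j | i].
- exact: leqnn.
- exact: leq_trans.
- rewrite !inE => /andP[a_i _] /andP[_ j_b] l /andP[i_l l_j].
  by rewrite inE (leq_trans a_i (ltnW i_l)) (leq_trans (ltnW l_j) j_b).
- by rewrite !inE => /andP[a_i _] /andP[_ i_b]; apply: f_step.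
Qed.

Lemma s_lcm_gt0 k m d : 0 < s_lcm k m d.
Proof.
rewrite /s_lcm; elim/big_ind: _ => // [x y|i _]; first by rewrite lcmn_gt0 => -> ->.
by rewrite /s_of addn1.
Qed.

Lemma dvdn_s_of k m d i : 1 <= i <= m -> s_of k d i %| s_lcm k m d * s_of k d m.
Proof.
move=> /andP[i_ge1]; rewrite leq_eqVlt => /predU1P[-> | lt_im]; first exact: dvdn_mull.
rewrite dvdn_mulr // /s_lcm (bigD1_seq i) ?mem_index_iota ?i_ge1 ?iota_uniq //=.
exact: dvdn_lcml.
Qed.

Section DigitDecomposition.
Variables (sm n h : nat).
Hypotheses (sm_gt0 : 0 < sm) (h_lt_n : h < n).

Definition low_part t := t %% sm ^ h.
Definition high_part t := t %/ sm ^ h.+1 %% sm ^ (n - h.+1).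
Definition rest_part t := high_part t * sm ^ h + low_part t.
Definition pair_index t := t %/ sm ^ n * sm + digit sm n h t.

Let expn_sm_gt0 e : 0 < sm ^ e.
Proof. by rewrite expn_gt0 sm_gt0. Qed.

Lemma digit_decomp t : t = ((t %/ sm ^ n * sm ^ (n - h.+1) + high_part t) * sm
  + digit sm n h t) * sm ^ h + low_part t.
Proof.
rewrite digitE // /high_part /low_part {1}(divn_eq t (sm ^ h)); congr (_ * _ + _).
rewrite {1}(divn_eq (t %/ sm ^ h) sm) -divnMA -expnSr; congr (_ * _ + _).
by rewrite {1}(divn_eq (t %/ sm ^ h.+1) (sm ^ (n - h.+1))) -divnMA -expnD subnKC.
Qed.

Lemma eq_of_parts t t' : low_part t = low_part t' -> high_part t = high_part t' ->
  pair_index t = pair_index t' -> t = t'.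
Proof.
move=> eq_low eq_high eq_pair.
have lt_dig u : digit sm n h u < sm by rewrite ltn_mod.
have [eq_top eq_dig] := edivn_uniq (lt_dig t) (lt_dig t') eq_pair.
by rewrite (digit_decomp t) (digit_decomp t') eq_top eq_high eq_dig eq_low.
Qed.

Lemma eq_digit_of_parts t t' j : low_part t = low_part t' -> high_part t = high_part t' ->
  j < n -> j != h -> digit sm n j t = digit sm n j t'.
Proof.
move=> eq_low eq_high lt_jn neq_jh.
rewrite !digitE //; case: (ltngtP j h) neq_jh => // [lt_jh | lt_hj] _.
  have dvd_low : sm * sm ^ j %| sm ^ h by rewrite -expnS dvdn_exp2l.
  by rewrite !modn_divl -(modn_dvdm t dvd_low) -(modn_dvdm t' dvd_low) -/(low_part t) eq_low.
have -> : sm ^ j = sm ^ h.+1 * sm ^ (j - h.+1) by rewrite -expnD subnKC.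
have dvd_high : sm * sm ^ (j - h.+1) %| sm ^ (n - h.+1).
  by rewrite -expnS dvdn_exp2l //; lia.
rewrite !divnMA (modn_divl (t %/ _)) (modn_divl (t' %/ _)).
rewrite -(modn_dvdm (t %/ _) dvd_high) -(modn_dvdm (t' %/ _) dvd_high).
by rewrite -/(high_part t) eq_high.
Qed.

Lemma pair_index_lt s t : t < s * sm ^ n -> pair_index t < s * sm.
Proof.
move=> lt_t; have lt_top : t %/ sm ^ n < s by rewrite ltn_divLR.
apply: leq_trans (_ : (t %/ sm ^ n).+1 * sm <= _); last by rewrite leq_mul2r lt_top orbT.
by rewrite mulSnr ltn_add2l ltn_mod.
Qed.

Lemma rest_part_lt t : rest_part t < sm ^ n.-1.
Proof.
have -> : n.-1 = n - h.+1 + h by lia.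
rewrite expnD /rest_part.
apply: leq_trans (_ : (high_part t).+1 * sm ^ h <= _).
  by rewrite mulSnr ltn_add2l ltn_mod.
by rewrite leq_mul2r ltn_mod expn_sm_gt0 orbT.
Qed.

End DigitDecomposition.

Section RepairBlocks.
Variables (sm n s si h : nat).
Hypotheses (sm_gt0 : 0 < sm) (h_lt_n : h < n) (si_gt0 : 0 < si) (si_dvd : si %| s * sm).

Local Notation ell := (s * sm ^ n).

Definition repair_block t := rest_part sm n h t * (s * sm %/ si) + pair_index sm n h t %/ si.

Lemma repair_block_lt t : t < ell -> repair_block t < ell %/ si.
Proof.
move=> lt_t; rewrite -(ltn_predK h_lt_n) expnS mulnA -divn_mulAC // mulnC /repair_block.
apply: leq_trans (_ : (rest_part sm n h t).+1 * (s * sm %/ si) <= _).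
  by rewrite mulSnr ltn_add2l ltn_divLR // divnK ?pair_index_lt.
by rewrite leq_mul2r rest_part_lt ?orbT.
Qed.

Lemma repair_block_eq t t' : t < ell -> t' < ell -> repair_block t = repair_block t' ->
  [/\ low_part sm h t = low_part sm h t', high_part sm n h t = high_part sm n h t'
    & pair_index sm n h t %/ si = pair_index sm n h t' %/ si].
Proof.
move=> lt_t lt_t' eq_blk.
have lt_cc u : u < ell -> pair_index sm n h u %/ si < s * sm %/ si.
  by move=> lt_u; rewrite ltn_divLR // divnK ?pair_index_lt.
have [eq_rest eq_pair] := edivn_uniq (lt_cc _ lt_t) (lt_cc _ lt_t') eq_blk.
have lt_low u : low_part sm h u < sm ^ h by rewrite ltn_mod expn_gt0 sm_gt0.
by have [? ?] := edivn_uniq (lt_low t) (lt_low t') eq_rest.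
Qed.

Lemma repair_block_digit t t' j : t < ell -> t' < ell -> repair_block t = repair_block t' ->
  j < n -> j != h -> digit sm n j t = digit sm n j t'.
Proof.
move=> lt_t lt_t' /(repair_block_eq lt_t lt_t')[eq_low eq_high _].
exact: (eq_digit_of_parts sm_gt0 h_lt_n eq_low eq_high).
Qed.

Lemma repair_block_digit_inj t t' : si <= sm -> t < ell -> t' < ell ->
  repair_block t = repair_block t' -> digit sm n h t = digit sm n h t' -> t = t'.
Proof.
move=> si_le_sm lt_t lt_t' /(repair_block_eq lt_t lt_t')[eq_low eq_high eq_div] eq_dig.
apply: (eq_of_parts sm_gt0 h_lt_n eq_low eq_high).
apply: (eq_of_divn_modn (sm := sm) _ eq_div).
  by rewrite si_gt0.
by rewrite /pair_index !modnMDl eq_dig.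
Qed.

Lemma card_repair_block b : #|[set t : 'I_ell | repair_block t == b]| <= si.
Proof.
rewrite -[si]card_ord.
apply: (@leq_card_in _ _ (fun t : 'I_ell => Ordinal (ltn_pmod (pair_index sm n h t) si_gt0))).
move=> t t'; rewrite !inE => /eqP blk_t /eqP blk_t' [eq_mod]; apply: val_inj.
have eq_blk : repair_block t = repair_block t' by rewrite blk_t blk_t'.
have [eq_low eq_high eq_div] := repair_block_eq (ltn_ord t) (ltn_ord t') eq_blk.
apply: (eq_of_parts sm_gt0 h_lt_n eq_low eq_high).
by rewrite (divn_eq (pair_index sm n h t) si) eq_div eq_mod -divn_eq.
Qed.

End RepairBlocks.

Local Open Scope ring_scope.

Lemma sum_horner_eq0 (R : nzRingType) (I : finType) (P : pred I) (mu z : I -> R)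
    (r : nat) (p : {poly R}) :
  (size p <= r)%N -> (forall e, (e < r)%N -> \sum_(x | P x) mu x ^+ e * z x = 0) ->
  \sum_(x | P x) p.[mu x] * z x = 0.
Proof.
move=> szp psum0.
under eq_bigr => x _ do rewrite (horner_coef_wide _ szp) mulr_suml.
rewrite exchange_big big1 // => e _.
under eq_bigr => x _ do rewrite -mulrA.
by rewrite -mulr_sumr psum0 ?mulr0.
Qed.

Lemma fibre_sums_eq0 (R : idomainType) (I : finType) (P : pred I) (mu z : I -> R)
    (S : seq R) (r : nat) :
  (size S <= r)%N -> {in P, forall x, mu x \in S} ->
  (forall e, (e < r)%N -> \sum_(x | P x) mu x ^+ e * z x = 0) ->
  forall v, \sum_(x | P x && (mu x == v)) z x = 0.
Proof.
move=> szS muS psum0 v.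
have [vS|vNS] := boolP (v \in S); last first.
  by rewrite big1 // => x /andP[Px /eqP muxv]; case/negP: vNS; rewrite -muxv muS.
have uS := undup_uniq S.
pose Q := \prod_(w <- rem v (undup S)) ('X - w%:P).
have szQ : (size Q <= r)%N.
  rewrite size_prod_XsubC size_rem ?mem_undup // prednK; last first.
    by rewrite lt0n size_eq0; apply: contraTneq vS => S0; rewrite -mem_undup S0.
  exact: leq_trans (size_undup S) szS.
have Qv : Q.[v] != 0 by rewrite -/(root Q v) root_prod_XsubC mem_rem_uniqF.
have Qmu x : P x -> mu x != v -> Q.[mu x] = 0.
  by move=> Px muxv; apply/rootP; rewrite root_prod_XsubC mem_rem_uniq // inE muxv mem_undup muS.
have := sum_horner_eq0 szQ psum0.
rewrite (bigID (fun x => mu x == v)) /= [X in _ + X]big1 ?addr0; last first.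
  by move=> x /andP[Px muxv]; rewrite Qmu ?mul0r.
under eq_bigr => x /andP[_ /eqP->] do [].
by rewrite -mulr_sumr => /eqP; rewrite mulf_eq0 (negbTE Qv) => /eqP.
Qed.

Section ParityCheckCode.
Variables (F : finFieldType) (n k ell : nat) (mu : 'I_n -> 'I_ell -> F).
Hypothesis mu_inj : forall (j j' : 'I_n) (t t' : 'I_ell), mu j t = mu j' t' -> j = j'.

Definition parity_code : pred 'M[F]_(n, ell) := fun c =>
  [forall t : 'I_ell, forall e : 'I_(n - k), \sum_(i < n) mu i t ^+ e * c i t == 0].

Local Notation C := parity_code.

Lemma parity_codeP (c : 'M[F]_(n, ell)) :
  reflect (forall t (e : nat), (e < n - k)%N -> \sum_(i < n) mu i t ^+ e * c i t = 0) (C c).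
Proof.
apply: (iffP forallP) => [Cc t e lt_e_r | Cc t].
  by have /forallP/(_ (Ordinal lt_e_r))/eqP := Cc t.
by apply/forallP => e; apply/eqP; apply: Cc.
Qed.

Definition syndrome (c : 'M[F]_(n, ell)) : 'M[F]_(n - k, ell) :=
  \matrix_(e, t) \sum_(i < n) mu i t ^+ e * c i t.

Lemma syndrome_is_linear : linear syndrome.
Proof.
move=> a x y; apply/matrixP => e t; rewrite !mxE mulr_sumr -big_split.
by apply: eq_bigr => i _; rewrite !mxE mulrDr mulrCA.
Qed.

HB.instance Definition _ := GRing.isLinear.Build F 'M[F]_(n, ell) 'M[F]_(n - k, ell) _
  syndrome syndrome_is_linear.

Lemma parity_codeE (c : 'M[F]_(n, ell)) : C c = (syndrome c == 0).
Proof.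
apply/parity_codeP/eqP => [Cc | c0 t e lt_e_r].
  by apply/matrixP => e t; rewrite !mxE Cc.
by have /matrixP/(_ (Ordinal lt_e_r) t) := c0; rewrite !mxE.
Qed.

Lemma parity_code_closed a x y : C x -> C y -> C (a *: x + y).
Proof. by rewrite !parity_codeE => /eqP x0 /eqP y0; rewrite linearP /= x0 y0 scaler0 addr0. Qed.

Lemma parity_codeB x y : C x -> C y -> C (x - y).
Proof. by rewrite !parity_codeE => /eqP x0 /eqP y0; rewrite raddfB /= x0 y0 subrr. Qed.

Lemma parity_code_eq0 (K : {set 'I_n}) (c : 'M[F]_(n, ell)) : #|K| = k -> C c ->
  (forall i t, i \in K -> c i t = 0) -> c = 0.
Proof.
move=> cardK /parity_codeP Cc cK0; apply/matrixP => j t; rewrite mxE.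
have [jK|jNK] := boolP (j \in K); first exact: cK0.
pose S := [seq mu i t | i <- enum (~: K)].
have := @fibre_sums_eq0 F _ (mem (~: K)) (mu^~ t) (c^~ t) S (n - k).
move/(_ _ _ _ (mu j t)); rewrite (big_pred1 j); first apply.
- rewrite size_map -cardE; have := cardsC K; rewrite card_ord cardK.
  by move=> /(canRL (addKn k)) /eq_leq.
- by move=> i iNK; apply: map_f; rewrite mem_enum.
- move=> e lt_e_r; rewrite -[RHS](Cc t e lt_e_r) [RHS](bigID (mem K)) /=.
  rewrite [X in _ = X + _]big1 ?add0r => [|i iK]; last by rewrite cK0 ?mulr0.
  by apply: eq_bigl => i; rewrite inE.
- move=> i /=; rewrite inE; apply/andP/eqP => [[_ /eqP /mu_inj] //| ->].
  by rewrite jNK.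
Qed.

Lemma card_parity_code : (k <= n)%N -> #|[set c | C c]| = (#|F| ^ (k * ell))%N.
Proof.
move=> kn.
pose Phi c := (mxsub (widen_ord kn) id c, syndrome c).
have Phi_inj : injective Phi.
  move=> c c' [/matrixP top_eq syn_eq].
  apply/eqP; rewrite -subr_eq0; apply/eqP.
  apply: (@parity_code_eq0 [set widen_ord kn i | i : 'I_k]).
  - by rewrite card_imset ?card_ord // => i i' /(congr1 val) /= /val_inj.
  - by rewrite parity_codeE raddfB /= syn_eq subrr.
  - move=> _ t /imsetP[i _ ->]; have := top_eq i t.
    by rewrite !mxE => ->; rewrite subrr.
have Phi_onto x : (x, 0) \in codom Phi.
  apply: (inj_card_onto Phi_inj).
  by rewrite card_prod !card_mx -expnD -mulnDl subnKC.
rewrite -(card_imset _ Phi_inj).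
have -> : Phi @: [set c | C c] = [set (x, 0 : 'M[F]_(n - k, ell)) | x : 'M[F]_(k, ell)].
  apply/setP => -[x y]; apply/imsetP/imsetP => [[c] | [x' _ [-> ->]]].
    rewrite inE parity_codeE => /eqP c0 [-> ->].
    by exists (mxsub (widen_ord kn) id c); rewrite ?c0.
  have /codomP [c [= -> c0]] := Phi_onto x'.
  exists c; first by rewrite inE parity_codeE -c0.
  by rewrite /Phi -c0.
by rewrite card_imset ?card_mx // => x x' [].
Qed.

Lemma parity_code_MDS : (k <= n)%N -> @is_MDS_array_code F n k ell C.
Proof.
move=> kn; split.
- by rewrite parity_codeE linear0.
- exact: parity_code_closed.
- exact: card_parity_code.
- move=> K cardK c c' Cc Cc' rows_eq; apply/eqP; rewrite -subr_eq0; apply/eqP.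
  apply: (parity_code_eq0 cardK (parity_codeB Cc Cc')) => i t iK.
  by have /rowP/(_ t) := rows_eq i iK; rewrite !mxE => ->; rewrite subrr.
Qed.

Definition repair_blocks (h : 'I_n) (si B : nat) (blk : 'I_ell -> 'I_B) : Prop :=
  [/\ forall j t t', j != h -> blk t = blk t' -> mu j t = mu j t',
      forall t t', blk t = blk t' -> mu h t = mu h t' -> t = t'
    & forall b, (#|[set t | blk t == b]| <= si)%N].

Lemma repair_kernel_eq0 (h : 'I_n) (R : {set 'I_n}) B (blk : 'I_ell -> 'I_B)
    (c : 'M[F]_(n, ell)) :
  (k <= #|R|)%N -> h \notin R -> repair_blocks h (#|R| - k + 1) blk -> C c ->
  (forall j b, j \in R -> \sum_(t | blk t == b) c j t = 0) -> forall t0, c h t0 = 0.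
Proof.
move=> kR hNR [blk_mu blk_inj blk_card] /parity_codeP Cc Rsum0 t0.
pose P (x : 'I_n * 'I_ell) := (x.1 \notin R) && (blk x.2 == blk t0).
pose S := [seq mu h t | t <- enum [set t | blk t == blk t0]] ++
          [seq mu j t0 | j <- enum (~: R :\ h)].
have := @fibre_sums_eq0 F _ P (fun x => mu x.1 x.2) (fun x => c x.1 x.2) S (n - k).
move/(_ _ _ _ (mu h t0)); rewrite (big_pred1 (h, t0)); first apply.
- rewrite size_cat !size_map -!cardE.
  have cardC : (#|R| + #|~: R :\ h| = n - 1)%N.
    rewrite -[n in RHS](card_ord n) -(cardsC R) (cardsD1 h (~: R)) in_setC hNR.
    by rewrite addnCA add1n subn1.
  rewrite -(leq_add2l #|R|) addnCA cardC.
  have := blk_card (blk t0); have := ltn_ord h; lia.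
- move=> [j t] /andP[/= jNR /eqP bt]; rewrite mem_cat.
  have [-> | jh] := eqVneq j h; first by rewrite map_f // mem_enum inE bt.
  by rewrite (blk_mu j t t0 jh bt) map_f ?orbT // mem_enum !inE jh jNR.
- move=> e lt_e_r.
  have : \sum_(t | blk t == blk t0) \sum_(j < n) mu j t ^+ e * c j t = 0.
    by rewrite big1 // => t _; apply: Cc.
  rewrite exchange_big (bigID (mem R)) /= big1 ?add0r => [sum0 | j jR]; last first.
    have jh : j != h by apply: contraNneq hNR => <-.
    under eq_bigr => t /eqP bt do rewrite (blk_mu j t t0 jh bt).
    by rewrite -mulr_sumr Rsum0 ?mulr0.
  by rewrite -[RHS]sum0 pair_big_dep.
- move=> [j t] /=; apply/andP/eqP => [[/andP[jNR /eqP bt] /eqP mu_eq] | [-> ->]].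
    by have jh := mu_inj mu_eq; subst j; congr pair; apply: blk_inj bt mu_eq.
  by rewrite /P /= hNR !eqxx.
Qed.

Lemma parity_code_repair_node (h : 'I_n) (R : {set 'I_n}) B (blk : 'I_ell -> 'I_B) :
  (k <= #|R|)%N -> h \notin R -> repair_blocks h (#|R| - k + 1) blk ->
  exists f : 'I_n -> 'rV[F]_ell -> 'rV[F]_B, exists g : ('I_n -> 'rV[F]_B) -> 'M[F]_(n, ell),
    forall c, C c -> row h (g (fun j => if j \in R then f j (row j c) else 0)) = row h c.
Proof.
move=> kR hNR blocks.
pose f (j : 'I_n) (x : 'rV[F]_ell) := \row_(b < B) \sum_(t | blk t == b) x 0 t.
pose g (data : 'I_n -> 'rV[F]_B) :=
  if [pick c | C c && [forall j in R, f j (row j c) == data j]] is Some c then c else 0.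
have f_row j x b : f j (row j x) 0 b = \sum_(t | blk t == b) x j t.
  by rewrite mxE; apply: eq_bigr => t _; rewrite mxE.
exists f, g => c Cc; rewrite /g; case: pickP => [c' /andP[Cc' /forall_inP c'_data] | none].
  apply/rowP => t0; apply/eqP; rewrite !mxE eq_sym -subr_eq0; apply/eqP.
  suff kernel : forall t, (c - c') h t = 0 by have := kernel t0; rewrite !mxE.
  apply: (repair_kernel_eq0 kR hNR blocks (parity_codeB Cc Cc')) => j b jR.
  have /eqP/rowP/(_ b) := c'_data j jR; rewrite jR !f_row => sums_eq.
  under eq_bigr => t _ do rewrite !mxE.
  by rewrite sumrB sums_eq subrr.
by have /negbT/negP[] := none c; rewrite Cc; apply/forall_inP => j jR; rewrite jR.
Qed.

Lemma parity_code_optimal_repair di : (k <= di)%N -> (di - k + 1 %| ell)%N ->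
  (forall h : 'I_n, exists blk : 'I_ell -> 'I_(repair_beta k ell 1 di),
      repair_blocks h (di - k + 1) blk) ->
  @optimal_repair F n k ell C 1 di.
Proof.
move=> kd si_dvd blocks; split; first by rewrite mul1n.
move=> _ R /eqP/cards1P[h ->] /esym cardR; rewrite disjoints1 => hNR.
have [blk blk_h] := blocks h; rewrite cardR in kd; rewrite [in (di - k)%N]cardR in blk_h.
have [f [g repair_h]] := parity_code_repair_node kd hNR blk_h.
by exists f, g => c Cc i; rewrite inE => /eqP ->; apply: repair_h.
Qed.

End ParityCheckCode.

Section DigitCode.
Variables (F : finFieldType) (n k s sm : nat) (lambda : 'I_n -> nat -> F).
Hypotheses (sm_gt0 : (0 < sm)%N) (lambda_inj : forall i i' j j', (j < sm)%N -> (j' < sm)%N ->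
  lambda i j = lambda i' j' -> i = i' /\ j = j').

Local Notation ell := (s * sm ^ n)%N.

(* For s = s_lcm and sm = s_of k d m, C1 is parity_code (digit_points lambda)
   up to unfolding. *)
Definition digit_points (i : 'I_n) (t : 'I_ell) := lambda i (digit sm n i t).

Lemma digit_points_inj j j' t t' : digit_points j t = digit_points j' t' -> j = j'.
Proof. by case/lambda_inj; rewrite ?ltn_mod. Qed.

Lemma digit_repair_blocks di (h : 'I_n) :
  (0 < s)%N -> (di - k + 1 <= sm)%N -> (di - k + 1 %| s * sm)%N ->
  exists blk : 'I_ell -> 'I_(repair_beta k ell 1 di),
    repair_blocks digit_points h (di - k + 1) blk.
Proof.
move=> s_gt0 si_le_sm si_dvd; set si := (di - k + 1)%N.
have si_gt0 : (0 < si)%N by rewrite /si addn1.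
have lt_blk (t : 'I_ell) : (repair_block sm n s si h t < repair_beta k ell 1 di)%N.
  by rewrite /repair_beta mul1n (repair_block_lt sm_gt0 (ltn_ord h) si_gt0 si_dvd).
exists (fun t => Ordinal (lt_blk t)); split.
- move=> j t t' neq_jh [eq_blk]; rewrite /digit_points.
  by rewrite (repair_block_digit sm_gt0 (ltn_ord h) si_gt0 si_dvd _ _ eq_blk).
- move=> t t' [eq_blk] /lambda_inj[]; rewrite ?ltn_mod // => _ eq_dig; apply: val_inj.
  apply: (repair_block_digit_inj sm_gt0 (ltn_ord h) si_gt0 si_dvd si_le_sm) eq_blk eq_dig;
    exact: ltn_ord.
- move=> b; apply: leq_trans (card_repair_block sm_gt0 (ltn_ord h) si_gt0 si_dvd b).
  by apply: subset_leq_card; apply/subsetP => t; rewrite !inE => /eqP <-.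
Qed.

End DigitCode.

Unset Implicit Arguments.

Theorem theorem1 (n k m : nat) (d : nat -> nat) (F : finFieldType)
  (lambda : 'I_n -> nat -> F) :
  (1 <= k)%N -> (k < n)%N -> (1 <= m)%N ->
  (k < d 1%N)%N ->
  (forall i, (1 <= i)%N -> (i < m)%N -> (d i < d i.+1)%N) ->
  (d m <= n - 1)%N ->
  (s_of k d m * n <= #|F|)%N ->
  (forall (i i' : 'I_n) (j j' : nat), (j < s_of k d m)%N -> (j' < s_of k d m)%N ->
     lambda i j = lambda i' j' -> i = i' /\ j = j') ->
  @is_MDS_array_code F n k (ell_of n k m d) (@C1 F n k m d lambda) /\
  (forall i, (1 <= i <= m)%N -> @optimal_repair F n k (ell_of n k m d) (@C1 F n k m d lambda) 1 (d i)).
Proof.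
move=> _ lt_kn m_gt0 lt_k_d1 d_incr le_dm_n _ lambda_inj.
have sm_gt0 : (0 < s_of k d m)%N by rewrite /s_of addn1.
have points_inj := digit_points_inj (s := s_lcm k m d) sm_gt0 lambda_inj.
split; first exact: (parity_code_MDS points_inj (ltnW lt_kn)).
move=> i /andP[i_ge1 le_im].
have d_mono := homo_leq_interval (fun j j_ge1 lt_jm => ltnW (d_incr j j_ge1 lt_jm)).
have le_d1i : (d 1 <= d i)%N by apply: d_mono; rewrite ?inE ?i_ge1 ?m_gt0 ?le_im.
have le_dim : (d i <= d m)%N by apply: d_mono; rewrite ?inE ?i_ge1 ?le_im ?leqnn ?andbT.
have si_dvd : (s_of k d i %| s_lcm k m d * s_of k d m)%N by rewrite dvdn_s_of ?i_ge1.
apply: (parity_code_optimal_repair points_inj) => [| | h]; first lia.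
- apply: dvdn_trans si_dvd _; rewrite dvdn_pmul2l ?s_lcm_gt0 //.
  by rewrite -{1}(expn1 (s_of k d m)) dvdn_exp2l //; lia.
- apply: (digit_repair_blocks sm_gt0 lambda_inj); rewrite ?s_lcm_gt0 //; rewrite /s_of; lia.
Qed.
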